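(* Let $G$ be a factor graph, $f_i$ an unknown factor of $G$, $C_{f_i}$ the set of known factors of $G$ that are possibly identical to $f_i$, and $C^{\ell}_{f_i}$ a maximal subset of $C_{f_i}$ such that $f_j\approx f_k$ for all $f_j,f_k\in C^{\ell}_{f_i}$. If $|C^{\ell}_{f_i}|/|C_{f_i}|>0.5$, then $C^{\ell}_{f_i}$ is unique, i.e. there is no other maximal subset $C^{\ell'}_{f_i}\ne C^{\ell}_{f_i}$ of $C_{f_i}$ with $|C^{\ell'}_{f_i}|=|C^{\ell}_{f_i}|$ whose elements are pairwise possibly identical.
   Context: A factor graph (FG) is an undirected bipartite graph with random variables (each with a finite range) and factors; each factor $f_j$ defines a function $\phi_j(\mathcal R_j)$ mapping assignments of a sequence $\mathcal R_j$ of random variables to positive reals (potentials), and a random variable is adjacent to $f_j$ iff it occurs in $\mathcal R_j$. A factor is \emph{unknown} if its potential values are unknown, otherwise known. Evidence is a set of observed events. $\mathrm{Ne}_G(v)$ is the neighbour set of node $v$. For factors $f_i,f_j$, their 2-step neighbourhoods are \emph{indistinguishable} if $|\mathrm{Ne}_G(f_i)|=|\mathrm{Ne}_G(f_j)|$ and there is a bijection $\tau:\mathrm{Ne}_G(f_i)\to\mathrm{Ne}_G(f_j)$ such that each $R_k$ and $\tau(R_k)$ have identical observed evidence, identical ranges, and the same number of neighbouring factors. Factors $f_i,f_j$ are \emph{possibly identical}, written $f_i\approx f_j$, if their 2-step neighbourhoods are indistinguishable and at least one of them is unknown or both encode identical potential mappings. Here ''maximal subset'' refers to a subset of largest cardinality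 among subsets of $C_{f_i}$ with pairwise possibly identical elements. *)

From HB Require Import structures.
From mathcomp Require Import all_boot all_order all_algebra.
From mathcomp Require Import boolp.
Set Implicit Arguments. Unset Strict Implicit. Unset Printing Implicit Defensive.
Import Order.TTheory GRing.Theory Num.Theory.

(* Evidence observed on a random
   variable is an element of Ev (e.g. [None] = unobserved).  A factor f has
   an argument sequence [fg_args f] (the sequence R_f) and a potential that
   is either unknown ([None]) or a known mapping from assignments to
   positive reals. *)
Record factor_graph (V F D : finType) (Ev : eqType) (R : realFieldType) := {
  fg_range : V -> {set D};
  fg_args : F -> seq V;
  fg_evidence : V -> Ev;
  fg_pot : F -> option (seq D -> R);
  fg_pot_pos : forall f p a, fg_pot f = Some p -> (0 < p a)%R
}.

Section FG.
Variables (V F D : finType) (Ev : eqType) (R : realFieldType).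
Variable G : factor_graph V F D Ev R.

Definition NeF (f : F) : {set V} := [set v | v \in fg_args G f].
Definition NeV (v : V) : {set F} := [set f | v \in fg_args G f].

Definition unknown (f : F) : bool := fg_pot G f == None.
Definition known (f : F) : bool := ~~ unknown f.

Definition indistinguishable (fi fj : F) : Prop :=
  #|NeF fi| = #|NeF fj| /\
  exists tau : V -> V,
    [/\ {in NeF fi &, injective tau},
        tau @: NeF fi = NeF fj &
        forall Rk, Rk \in NeF fi ->
          [/\ fg_evidence G (tau Rk) = fg_evidence G Rk,
              fg_range G (tau Rk) = fg_range G Rk &
              #|NeV (tau Rk)| = #|NeV Rk| ]].

Definition identical_potentials (fi fj : F) : Prop :=
  exists p q, [/\ fg_pot G fi = Some p, fg_pot G fj = Some q &
                  forall a, p a = q a].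

Definition possibly_identical (fi fj : F) : Prop :=
  indistinguishable fi fj /\
  (unknown fi \/ unknown fj \/ identical_potentials fi fj).

Definition candidates (fi : F) : {set F} :=
  [set fj | known fj & `[< possibly_identical fi fj >]].

Definition pairwise_possibly_identical (S : {set F}) : Prop :=
  forall fj fk, fj \in S -> fk \in S -> possibly_identical fj fk.

Definition maximal_subset (fi : F) (S : {set F}) : Prop :=
  [/\ S \subset candidates fi, pairwise_possibly_identical S &
      forall S' : {set F}, S' \subset candidates fi ->
        pairwise_possibly_identical S' ->
        #|S'| <= #|S| ]%N.

End FG.

(* Among known factors, possibly_identical is transitive: indistinguishability
   composes, and identical potentials are shared.  Hence two pairwise possibly
   identical subsets of C with a common element have a pairwise possibly
   identical union.  Two subsets of C each holding more than half of C must
   meet, so the union of two maximal subsets is again admissible; maximality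
   then forces each to equal the union. *)
From HB Require Import structures.
From mathcomp Require Import all_boot all_order all_algebra.
Set Implicit Arguments. Unset Strict Implicit. Unset Printing Implicit Defensive.
Import Order.TTheory GRing.Theory Num.Theory.

Lemma half_lt_ratio (R : realFieldType) (a c : nat) :
  (1 / 2 < a%:R / c%:R :> R)%R -> (c < a.*2)%N.
Proof.
have [->|c_gt0] := posnP c; first by rewrite invr0 mulr0 ltNge divr_ge0.
rewrite ltr_pdivlMr ?ltr0n // mulrC mul1r ltr_pdivrMr ?ltr0n //.
by rewrite -natrM ltr_nat muln2.
Qed.

Lemma setI_majorities (T : finType) (C A B : {set T}) :
  A \subset C -> B \subset C -> (#|C| < #|A| + #|B|)%N -> A :&: B != set0.
Proof.
move=> sAC sBC ltC; rewrite -card_gt0 -(ltn_add2l #|A :|: B|) addn0 cardsUI.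
by apply: leq_trans ltC; rewrite ltnS subset_leq_card // subUset sAC.
Qed.

Section PossiblyIdentical.
Variables (V F D : finType) (Ev : eqType) (R : realFieldType).
Variable G : factor_graph V F D Ev R.

Lemma indistinguishable_trans a b c :
  indistinguishable G a b -> indistinguishable G b c -> indistinguishable G a c.
Proof.
move=> [card_ab [t1 [inj1 im1 P1]]] [card_bc [t2 [inj2 im2 P2]]].
split; first by rewrite card_ab.
have t1_in x : x \in NeF G a -> t1 x \in NeF G b by rewrite -im1; apply: imset_f.
exists (t2 \o t1); split.
- move=> x y xa ya /= E; apply: inj1 => //.
  exact: inj2 (t1_in _ xa) (t1_in _ ya) E.
- by rewrite imset_comp im1 im2.
- move=> x xa /=; have [ev1 rg1 nv1] := P1 x xa.
  have [ev2 rg2 nv2] := P2 _ (t1_in x xa).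
  by split; [rewrite ev2 ev1 | rewrite rg2 rg1 | rewrite nv2 nv1].
Qed.

Lemma identical_potentials_trans a b c :
  identical_potentials G a b -> identical_potentials G b c ->
  identical_potentials G a c.
Proof.
move=> [p [q [pa qb pq]]] [q' [r [qb' rc qr]]].
have q_q' : q = q' by move: qb'; rewrite qb => -[].
by exists p, r; split=> // x; rewrite pq q_q' qr.
Qed.

Lemma possibly_identical_trans a b c : known G a -> known G b -> known G c ->
  possibly_identical G a b -> possibly_identical G b c ->
  possibly_identical G a c.
Proof.
rewrite /known => /negPf ka /negPf kb /negPf kc [ind_ab pot_ab] [ind_bc pot_bc].
split; first exact: indistinguishable_trans ind_bc.
right; right.
case: pot_ab => [|[|]]; rewrite ?ka ?kb // => pot_ab.
case: pot_bc => [|[|]]; rewrite ?kb ?kc // => pot_bc.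
exact: identical_potentials_trans pot_ab pot_bc.
Qed.

Lemma pairwise_possibly_identical_setU (A B : {set F}) :
  {subset A :|: B <= known G} -> A :&: B != set0 ->
  pairwise_possibly_identical G A -> pairwise_possibly_identical G B ->
  pairwise_possibly_identical G (A :|: B).
Proof.
move=> kAB /set0Pn[y]; rewrite inE => /andP[yA yB] piA piB.
have kA x : x \in A -> known G x by move=> xA; apply: kAB; rewrite inE xA.
have kB x : x \in B -> known G x by move=> xB; apply: kAB; rewrite inE xB orbT.
move=> a b; rewrite !inE => /orP[aA|aB] /orP[bA|bB]; try by [apply: piA|apply: piB].
- apply: (possibly_identical_trans (kA _ aA) (kA _ yA) (kB _ bB)).
    exact: piA.
  exact: piB.
- apply: (possibly_identical_trans (kB _ aB) (kB _ yB) (kA _ bA)).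
    exact: piB.
  exact: piA.
Qed.

Lemma candidates_known fi : {subset candidates G fi <= known G}.
Proof. by move=> x; rewrite inE => /andP[]. Qed.

Lemma maximal_subset_setU fi (Cl Cl' : {set F}) :
  maximal_subset G fi Cl -> Cl' \subset candidates G fi ->
  pairwise_possibly_identical G Cl' -> Cl :&: Cl' != set0 ->
  Cl :|: Cl' = Cl.
Proof.
move=> [sCl piCl maxCl] sCl' piCl' meet.
have sU : Cl :|: Cl' \subset candidates G fi by rewrite subUset sCl.
apply/eqP; rewrite eq_sym eqEcard subsetUl maxCl //.
apply: pairwise_possibly_identical_setU => // x /(subsetP sU).
exact: candidates_known.
Qed.

End PossiblyIdentical.

Theorem mainTheorem2 (V F D : finType) (Ev : eqType) (R : realFieldType)
  (G : factor_graph V F D Ev R) (fi : F) (Cl : {set F}) :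
  unknown G fi ->
  maximal_subset G fi Cl ->
  (1 / 2 < (#|Cl|%:R / #|candidates G fi|%:R : rat))%R ->
  forall Cl' : {set F},
    Cl' \subset candidates G fi ->
    pairwise_possibly_identical G Cl' ->
    #|Cl'| = #|Cl| ->
    Cl' = Cl.
Proof.
move=> _ maxCl /half_lt_ratio ltC Cl' sCl' piCl' eq_card.
have [sCl piCl maxC] := maxCl.
have maxCl' : maximal_subset G fi Cl'.
  by split=> // S sS piS; rewrite eq_card; apply: maxC.
have meet : Cl :&: Cl' != set0.
  by apply: setI_majorities sCl sCl' _; rewrite eq_card addnn.
rewrite -(maximal_subset_setU maxCl sCl' piCl' meet).
by rewrite setUC (maximal_subset_setU maxCl') // setIC.
Qed.
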